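(* The set of parallelogram polyominoes equals $Av_{\mathfrak{P}}\left(\begin{bmatrix}1&0\\1&1\end{bmatrix},\begin{bmatrix}1&1\\0&1\end{bmatrix}\right)$.
   Context: A polyomino is a finite union of unit cells of $\mathbb{Z}\times\mathbb{Z}$ that is connected via edge adjacency, up to translation, identified with the binary matrix of its minimal bounding rectangle (entry $1$ iff the corresponding unit square is a cell; rows numbered bottom to top, and in displayed matrices the first written row is the top row). A matrix is a submatrix of another if obtained by deleting rows and/or columns; $Av_{\mathfrak{P}}(\mathcal{M})$ is the set of polyominoes with no submatrix in $\mathcal{M}$. A parallelogram polyomino is a polyomino whose boundary can be decomposed into two lattice paths (upper and lower) made of north and east unit steps which meet only at their common starting and ending points. *)

From mathcomp Require Import all_boot all_order all_algebra.
Set Implicit Arguments. Unset Strict Implicit. Unset Printing Implicit Defensive.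
Import Order.TTheory GRing.Theory Num.Theory.
Local Open Scope ring_scope.

(* A cell (x, y) of Z x Z is the unit square [x, x+1] x [y, y+1].
   A finite set of cells is represented by a sequence (membership only matters). *)
Definition cell := (int * int)%type.

Definition adjacent (c d : cell) : bool :=
  (`|c.1 - d.1| + `|c.2 - d.2| == 1)%N.

Definition is_polyomino (s : seq cell) : Prop :=
  s != [::] /\
  forall c d, c \in s -> d \in s ->
    exists p : seq cell, all (fun e => e \in s) p /\ path adjacent c p /\ last c p = d.

Definition xmin (s : seq cell) : int :=
  \big[Num.min/(head (0,0) s).1]_(c <- s) c.1.
Definition ymax (s : seq cell) : int :=
  \big[Num.max/(head (0,0) s).2]_(c <- s) c.2.
Definition xmax (s : seq cell) : int :=
  \big[Num.max/(head (0,0) s).1]_(c <- s) c.1.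
Definition ymin (s : seq cell) : int :=
  \big[Num.min/(head (0,0) s).2]_(c <- s) c.2.
Definition pwidth (s : seq cell) : nat := (`|xmax s - xmin s|).+1.
Definition pheight (s : seq cell) : nat := (`|ymax s - ymin s|).+1.

(* binary matrix of the minimal bounding rectangle, in display order:
   matrix row 0 is the TOP row (y = ymax), column 0 is the leftmost (x = xmin) *)
Definition poly_matrix (s : seq cell) : 'M[bool]_(pheight s, pwidth s) :=
  \matrix_(i < pheight s, j < pwidth s) ((xmin s + (j : nat)%:Z, ymax s - (i : nat)%:Z) \in s).

Definition submatrix_of (k l m n : nat) (A : 'M[bool]_(k, l)) (M : 'M[bool]_(m, n)) : Prop :=
  exists (f : 'I_k -> 'I_m) (g : 'I_l -> 'I_n),
    (forall i i' : 'I_k, (i < i')%N -> (f i < f i')%N) /\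
    (forall j j' : 'I_l, (j < j')%N -> (g j < g j')%N) /\
    (forall i j, M (f i) (g j) = A i j).

(* the two 2x2 patterns, written in display order (first row = top row) *)
(* [1 0; 1 1] *)
Definition pat1 : 'M[bool]_(2, 2) :=
  \matrix_(i < 2, j < 2) ~~ (((i : nat) == 0%N) && ((j : nat) == 1%N)).
(* [1 1; 0 1] *)
Definition pat2 : 'M[bool]_(2, 2) :=
  \matrix_(i < 2, j < 2) ~~ (((i : nat) == 1%N) && ((j : nat) == 0%N)).

Definition avoids_pats (s : seq cell) : Prop :=
  ~ submatrix_of pat1 (poly_matrix s) /\ ~ submatrix_of pat2 (poly_matrix s).

(* Lattice paths made of north (true) and east (false) unit steps, from (0,0). *)
Definition lpt (u : seq bool) (k : nat) : nat * nat :=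
  (count negb (take k u), count id (take k u)).

Definition east_step (u : seq bool) (x y : nat) : Prop :=
  exists2 k, (k < size u)%N & nth true u k = false /\ lpt u k = (x, y).

Definition between (u l : seq bool) (x y : int) : Prop :=
  exists (n : nat) (yu yl : nat), x = n%:Z /\ east_step u n yu /\ east_step l n yl /\
     yl%:Z <= y /\ y < yu%:Z.

(* parallelogram polyomino: its boundary decomposes into two N/E lattice paths
   (upper u, lower l) with common start and end point which meet only there;
   the polyomino is the region enclosed by them (up to translation). *)
Definition is_parallelogram (s : seq cell) : Prop :=
  exists (u l : seq bool) (dx dy : int),
    size u = size l /\ lpt u (size u) = lpt l (size l) /\
    (forall i j, (i <= size u)%N -> (j <= size l)%N -> lpt u i = lpt l j ->
        (i = 0%N /\ j = 0%N) \/ (i = size u /\ j = size l)) /\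
    (forall c : cell, c \in s <-> between u l (c.1 - dx) (c.2 - dy)).

(* A 2x2 submatrix of the bounding-box matrix is given by the four corners of an
   axis-parallel rectangle, so avoiding [1 0; 1 1] and [1 1; 0 1] says: if the SW, NW
   and SE corners of a rectangle are cells then so is the NE one, and if the NW, NE and
   SE corners are cells then so is the SW one.  In a parallelogram polyomino both hold
   because the heights of the lower and of the upper boundary path are nondecreasing.
   Conversely, in a connected set with both closure properties every column is an
   interval: a path that leaves a column and comes back does so on one side, and one of
   the two closures fills the column from the neighbouring one.  Consecutive columns
   overlap (a path from the leftmost to the rightmost cell crosses between them) and the
   closures force their bottoms and tops to be nondecreasing, so the staircases through
   the column bottoms and tops bound the set and meet only at their ends. *)

From mathcomp Require Import all_boot all_order all_algebra zify.
Import Order.TTheory GRing.Theory Num.Theory.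

Set Implicit Arguments.
Unset Strict Implicit.
Unset Printing Implicit Defensive.

Lemma homo_leq_upto (T : Type) (r : rel T) (f : nat -> T) W :
  reflexive r -> transitive r -> (forall n, n.+1 < W -> r (f n) (f n.+1)) ->
  forall m n, m <= n -> n < W -> r (f m) (f n).
Proof.
move=> r_refl r_trans f_step m n le_mn lt_nW.
apply: (@homo_leq_in T [pred n | n < W] f r r_refl r_trans _ _ m n) => //.
- by move=> i j _ lt_jW k /andP[_ /ltn_trans]; apply.
- by move=> i _ /f_step.
- exact: leq_ltn_trans lt_nW.
Qed.

Lemma bigmin_mem d (T : orderType d) (I : Type) (r : seq I) (x : T) (F : I -> T) :
  \big[Order.min/x]_(i <- r) F i \in x :: map F r.
Proof.
elim: r => [|i r IH]; first by rewrite big_nil mem_head.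
rewrite big_cons /= !inE; case: leP => _; first by rewrite eqxx orbT.
by move: IH; rewrite inE => /orP[->|->]; rewrite ?orbT.
Qed.

Lemma bigmax_mem d (T : orderType d) (I : Type) (r : seq I) (x : T) (F : I -> T) :
  \big[Order.max/x]_(i <- r) F i \in x :: map F r.
Proof.
elim: r => [|i r IH]; first by rewrite big_nil mem_head.
rewrite big_cons /= !inE; case: leP => _; last by rewrite eqxx orbT.
by move: IH; rewrite inE => /orP[->|->]; rewrite ?orbT.
Qed.

(** * Lattice paths *)

Lemma lpt0 u : lpt u 0 = (0, 0).
Proof. by rewrite /lpt take0. Qed.

Lemma lpt_size u : lpt u (size u) = (count negb u, count id u).
Proof. by rewrite /lpt take_size. Qed.

Lemma lptS u i : i < size u ->
  lpt u i.+1 = if nth true u i then ((lpt u i).1, (lpt u i).2.+1)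
               else ((lpt u i).1.+1, (lpt u i).2).
Proof.
move=> lt_i; rewrite /lpt (take_nth true lt_i) -!cats1 !count_cat /=.
by case: (nth true u i); rewrite /= !addn0 ?addn1.
Qed.

Lemma lpt_cons b r k : lpt (b :: r) k.+1 =
  if b then ((lpt r k).1, (lpt r k).2.+1) else ((lpt r k).1.+1, (lpt r k).2).
Proof. by rewrite /lpt /=; case: b. Qed.

Lemma lpt_sum u i : (lpt u i).1 + (lpt u i).2 = minn i (size u).
Proof.
rewrite /lpt /= addnC -size_take_min -(count_predC id (take i u)).
by congr (_ + _); apply: eq_count.
Qed.

Lemma lpt_mono u {i j} : i <= j -> (lpt u i).1 <= (lpt u j).1 /\ (lpt u i).2 <= (lpt u j).2.
Proof.
by move=> le_ij; rewrite /lpt /= -(subnKC le_ij) takeD !count_cat; split; apply: leq_addr.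
Qed.

Lemma lpt_le_count u i : (lpt u i).1 <= count negb u /\ (lpt u i).2 <= count id u.
Proof. by have := lpt_mono u (leq_addr (size u) i); rewrite {2 4}/lpt take_oversize ?leq_addl. Qed.

Lemma east_step_cons_true r n y :
  east_step (true :: r) n y <-> exists2 y', y = y'.+1 & east_step r n y'.
Proof.
split=> [[[|k] lt_k [Nk Ek]] //|[y' -> [k lt_k [Nk Ek]]]].
- move: Ek; rewrite lpt_cons; case Ek: (lpt r k) => [a b] [<- <-].
  by exists b => //; exists k.
- by exists k.+1 => //; split; rewrite // lpt_cons Ek.
Qed.

Lemma east_step_cons_false r n y : east_step (false :: r) n y <->
  (n = 0 /\ y = 0) \/ exists2 n', n = n'.+1 & east_step r n' y.
Proof.
split=> [[[|k] lt_k [Nk Ek]]|[[-> ->]|[n' -> [k lt_k [Nk Ek]]]]].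
- by left; move: Ek; rewrite lpt0 => -[<- <-].
- move: Ek; rewrite lpt_cons; case Ek: (lpt r k) => [a b] [<- <-].
  by right; exists a => //; exists k.
- by exists 0.
- by exists k.+1 => //; split; rewrite // lpt_cons Ek.
Qed.

Lemma east_step_exists u x : x < count negb u -> exists y, east_step u x y.
Proof.
elim: u x => [|[] r IH] x //= lt_x.
- have [y Ey] := IH x lt_x.
  by exists y.+1; apply/east_step_cons_true; exists y.
- case: x lt_x => [|x] lt_x; first by exists 0; apply/east_step_cons_false; left.
  by have [y Ey] := IH x lt_x; exists y; apply/east_step_cons_false; right; exists x.
Qed.

Lemma east_step_mono u n1 y1 n2 y2 :
  east_step u n1 y1 -> east_step u n2 y2 -> n1 <= n2 -> y1 <= y2.
Proof.
case=> k1 lt_k1 [_ E1] [k2 lt_k2 [N2 E2]] le_n.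
case: (leqP k1 k2) => [le_k|lt_k].
- by have [_] := lpt_mono u le_k; rewrite E1 E2.
- by have [+ _] := lpt_mono u lt_k; rewrite lptS // N2 E1 E2 /=; lia.
Qed.

Lemma east_step_after {u i x y} :
  lpt u i = (x, y) -> x < count negb u -> exists2 y', y <= y' & east_step u x y'.
Proof.
move=> Ei /east_step_exists [y' [k lt_k [Nk Ek]]].
exists y'; last by exists k.
case: (leqP i k) => [le_ik|lt_ki].
- by have [_] := lpt_mono u le_ik; rewrite Ei Ek.
- by have [+ _] := lpt_mono u lt_ki; rewrite lptS // Nk Ek Ei /=; lia.
Qed.

Lemma east_step_before {u i x y} :
  lpt u i = (x.+1, y) -> exists2 y', y' <= y & east_step u x y'.
Proof.
move=> Ei; have [+ _] := lpt_le_count u i; rewrite Ei => /= /east_step_exists.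
move=> [y' [k lt_k [Nk Ek]]]; exists y'; last by exists k.
case: (leqP i k) => [le_ik|lt_ki].
- by have [+ _] := lpt_mono u le_ik; rewrite Ei Ek /=; lia.
- by have [_] := lpt_mono u lt_ki; rewrite lptS // Nk Ek Ei.
Qed.

Lemma east_step_nseq k r n y :
  east_step (nseq k true ++ r) n y <-> exists2 y', y = y' + k & east_step r n y'.
Proof.
elim: k n y => [|k IH] n y /=.
  by split=> [Ey|[y' -> //]]; [exists y; rewrite ?addn0 | rewrite addn0].
rewrite east_step_cons_true; split=> [[y' -> /IH [y'' -> Ey]]|[y' -> Ey]].
  by exists y'' => //; rewrite addnS.
by exists (y' + k); [rewrite addnS | apply/IH; exists y'].
Qed.

Lemma east_step_nseqN k n y : ~ east_step (nseq k true) n y.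
Proof. by case=> i lt_i []; rewrite nth_nseq; case: ifP. Qed.

Fixpoint staircase (h0 : nat) (hs : seq nat) (H : nat) : seq bool :=
  if hs is h :: hs' then nseq (h - h0) true ++ false :: staircase h hs' H
  else nseq (H - h0) true.

Lemma east_step_staircase h0 hs H n y : path leq h0 hs ->
  east_step (staircase h0 hs H) n y <-> n < size hs /\ y + h0 = nth 0 hs n.
Proof.
elim: hs h0 n y => [|h hs IH] h0 n y /=.
  by move=> _; split=> [/east_step_nseqN|[]].
case/andP=> le_h0h hs_sorted; rewrite east_step_nseq.
split=> [[y' -> /east_step_cons_false [[-> ->]|[n' -> /(IH _ _ _ hs_sorted) [lt_n' Ey]]]]|].
1,2: by split=> //=; lia.
case: n => [|n] /= [lt_n Ey].
  by exists 0; [lia | apply/east_step_cons_false; left].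
have le_hn : h <= nth 0 hs n.
  by move: hs_sorted; rewrite (path_sortedE leq_trans) => /andP[/allP-> //]; apply: mem_nth.
exists (y + h0 - h); first lia.
by apply/east_step_cons_false; right; exists n => //; apply/IH => //; split=> //; lia.
Qed.

Lemma count_negb_staircase h0 hs H : count negb (staircase h0 hs H) = size hs.
Proof.
elim: hs h0 => [|h hs IH] h0 /=; first by rewrite count_nseq mul0n.
by rewrite count_cat count_nseq mul0n /= IH.
Qed.

Lemma count_id_staircase h0 hs H : path leq h0 hs -> all (leq^~ H) hs ->
  count id (staircase h0 hs H) = H - h0.
Proof.
elim: hs h0 => [|h hs IH] h0 /=; first by rewrite count_nseq mul1n.
case/andP=> le_h0h hs_sorted /andP[le_hH hs_le].
by rewrite count_cat count_nseq mul1n /= IH //; lia.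
Qed.

(* Both paths reach a common point after the same number x + y of steps.  For
   0 < x < W the upper path has already stepped east at height U (x - 1) <= y while the
   lower path will step east at height L x >= y, contradicting L x < U (x - 1). *)
Lemma lattice_paths_meet_at_ends u l W H (U L : nat -> nat) :
  0 < W -> count negb u = W -> count negb l = W -> count id u = H -> count id l = H ->
  (forall n y, east_step u n y -> y = U n) -> (forall n y, east_step l n y -> y = L n) ->
  L 0 = 0 -> U W.-1 = H -> (forall n, n.+1 < W -> L n.+1 < U n) ->
  forall i j, i <= size u -> j <= size l -> lpt u i = lpt l j ->
    (i = 0 /\ j = 0) \/ (i = size u /\ j = size l).
Proof.
move=> W_gt0 u_east l_east u_north l_north Eu El L0 UW lt_LU i j le_i le_j Eij.
have size_u : size u = W + H by rewrite -(count_predC id u) addnC u_east u_north.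
have size_l : size l = W + H by rewrite -(count_predC id l) addnC l_east l_north.
have := lpt_sum u i; have := lpt_sum l j; rewrite -Eij => sum_j sum_i.
have {sum_j} Eji : j = i by lia.
subst j; have l_cols x' : x' < W -> x' < count negb l by rewrite l_east.
have [le_xW le_yH] := lpt_le_count u i.
case Eu_i: (lpt u i) Eij sum_i le_xW le_yH => [[|x] y] El_i /= sum_i le_xW le_yH.
- case: (posnP y) => [y0|y_gt0]; first by left; lia.
  have [y' le_yy' /El] := east_step_after (esym El_i) (l_cols _ W_gt0).
  by lia.
- have [yu le_yu /Eu Eyu] := east_step_before Eu_i.
  have [x_lt|x_ge] := ltnP x.+1 W.
    have [yl le_yl /El Eyl] := east_step_after (esym El_i) (l_cols _ x_lt).
    by have := lt_LU x x_lt; lia.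
  have Ex : x = W.-1 by lia.
  by right; move: Eyu; rewrite Ex UW; lia.
Qed.

Lemma sorted_mkseq f W : (forall n, n.+1 < W -> f n <= f n.+1) -> sorted leq (mkseq f W).
Proof.
move=> f_step; apply/(sortedP 0) => i; rewrite size_mkseq => lt_iW.
by rewrite !nth_mkseq ?(ltnW lt_iW) // f_step.
Qed.

Lemma east_step_staircase_mkseq f W H n y : (forall n, n.+1 < W -> f n <= f n.+1) ->
  east_step (staircase 0 (mkseq f W) H) n y <-> n < W /\ y = f n.
Proof.
move=> f_step; rewrite east_step_staircase ?size_mkseq ?addn0; last first.
  by rewrite (path_sortedE leq_trans) sorted_mkseq // andbT; apply/allP.
by split=> -[lt_n ->]; rewrite ?nth_mkseq.
Qed.

Lemma lpt_end_staircase_mkseq f W H :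
  (forall n, n.+1 < W -> f n <= f n.+1) -> (forall n, n < W -> f n <= H) ->
  lpt (staircase 0 (mkseq f W) H) (size (staircase 0 (mkseq f W) H)) = (W, H).
Proof.
move=> f_step f_le; rewrite lpt_size count_negb_staircase size_mkseq.
rewrite count_id_staircase ?subn0 ?(path_sortedE leq_trans) ?sorted_mkseq ?andbT //.
  by apply/allP.
by apply/allP => x /mapP[n]; rewrite mem_iota add0n => /andP[_ /f_le] + ->.
Qed.

Local Open Scope ring_scope.

(** * Parallelogram polyominoes from their columns *)

Lemma parallelogram_of_heights (s : seq cell) (x0 y0 : int) W (lo hi : nat -> nat) :
  (0 < W)%N -> lo 0 = 0%N -> (forall n, (n < W)%N -> (lo n < hi n)%N) ->
  (forall n, (n.+1 < W)%N -> [/\ lo n <= lo n.+1, hi n <= hi n.+1 & lo n.+1 < hi n]%N) ->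
  (forall c : cell, c \in s <-> exists2 n, (n < W)%N &
     [/\ c.1 - x0 = n%:Z, (lo n)%:Z <= c.2 - y0 & c.2 - y0 < (hi n)%:Z]) ->
  is_parallelogram s.
Proof.
move=> W_gt0 lo0 lt_lohi step Es; pose H := hi W.-1.
have hi_step n : (n.+1 < W)%N -> (hi n <= hi n.+1)%N by case/step.
have lo_step n : (n.+1 < W)%N -> (lo n <= lo n.+1)%N by case/step.
have hi_le n : (n < W)%N -> (hi n <= H)%N.
  by move=> lt_n; apply: (homo_leq_upto leqnn leq_trans hi_step); lia.
have lo_le n : (n < W)%N -> (lo n <= H)%N.
  by move=> lt_n; have := hi_le n lt_n; have := lt_lohi n lt_n; lia.
pose u := staircase 0 (mkseq hi W) H; pose l := staircase 0 (mkseq lo W) H.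
have Eu n y : east_step u n y <-> (n < W)%N /\ y = hi n := east_step_staircase_mkseq _ _ _ hi_step.
have El n y : east_step l n y <-> (n < W)%N /\ y = lo n := east_step_staircase_mkseq _ _ _ lo_step.
have u_end : lpt u (size u) = (W, H) := lpt_end_staircase_mkseq hi_step hi_le.
have l_end : lpt l (size l) = (W, H) := lpt_end_staircase_mkseq lo_step lo_le.
have [u_east u_north] : count negb u = W /\ count id u = H by move: u_end; rewrite lpt_size => -[].
have [l_east l_north] : count negb l = W /\ count id l = H by move: l_end; rewrite lpt_size => -[].
exists u, l, x0, y0; split; [|split; [|split]].
- by have := lpt_sum u (size u); have := lpt_sum l (size l); rewrite u_end l_end; lia.
- by rewrite u_end l_end.
- apply: (lattice_paths_meet_at_ends (U := hi) (L := lo) W_gt0 u_east l_east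
    u_north l_north) => //.
  + by move=> n y /Eu[].
  + by move=> n y /El[].
  + by move=> n; case/step.
- move=> c; rewrite Es.
  split=> [[n lt_n [Ex le_lo lt_hi]]|[n [yu [yl [Ex [/Eu[lt_n ->] [/El[_ ->] []]]]]]]].
    by exists n, (hi n), (lo n); split=> //; split; [apply/Eu | split; [apply/El|]].
  by exists n.
Qed.

(* The upper boundary runs along the top edges, at height [t n + 1]. *)
Lemma parallelogram_of_columns (s : seq cell) (x0 : int) (W : nat) (b t : nat -> int) :
  (0 < W)%N -> (forall n, (n < W)%N -> b n <= t n) ->
  (forall n, (n.+1 < W)%N -> [/\ b n <= b n.+1, t n <= t n.+1 & b n.+1 <= t n]) ->
  (forall c : cell, c \in s <-> exists2 n, (n < W)%N & c.1 = x0 + n%:Z /\ b n <= c.2 <= t n) ->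
  is_parallelogram s.
Proof.
move=> W_gt0 le_bt step Es.
have b0_le n : (n < W)%N -> b 0 <= b n.
  by apply: (@homo_leq_upto _ <=%R b W lexx (@le_trans _ _)) => // k /step[].
apply: (@parallelogram_of_heights s x0 (b 0) W (fun n => `|(b n - b 0)%R|%N)
  (fun n => `|(t n + 1 - b 0)%R|%N)).
- exact: W_gt0.
- by rewrite subrr.
- by move=> n lt_n; have := b0_le n lt_n; have := le_bt n lt_n; lia.
- move=> n lt_n; have [le_b le_t le_bt'] := step n lt_n.
  by have := b0_le n (ltnW lt_n); have := le_bt n (ltnW lt_n); split; lia.
- move=> c; rewrite Es; split=> -[n lt_n]; move: (b0_le n lt_n) (le_bt n lt_n).
    by move=> b0_le_n le_bt_n [Ex /andP[le_by le_yt]]; exists n => //; split; lia.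
  move=> b0_le_n le_bt_n [Ex le_y lt_y].
  by exists n => //; split; [lia | apply/andP; split; lia].
Qed.

(** * Pattern avoidance as rectangle closure *)

Lemma mem_bbox (s : seq cell) (c : cell) :
  c \in s -> (xmin s <= c.1 <= xmax s) && (ymin s <= c.2 <= ymax s).
Proof.
by move=> cs; rewrite /xmin /xmax /ymin /ymax !(ge_bigmin_seq, le_bigmax_seq).
Qed.

Lemma xmin_mem (s : seq cell) : s != [::] -> xmin s \in [seq c.1 | c <- s].
Proof.
case: s => // c r _; rewrite /xmin /=.
have := bigmin_mem (c :: r) c.1 (fun e : cell => e.1).
by rewrite inE => /orP[/eqP ->|//]; rewrite mem_head.
Qed.

Lemma xmax_mem (s : seq cell) : s != [::] -> xmax s \in [seq c.1 | c <- s].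
Proof.
case: s => // c r _; rewrite /xmax /=.
have := bigmax_mem (c :: r) c.1 (fun e : cell => e.1).
by rewrite inE => /orP[/eqP ->|//]; rewrite mem_head.
Qed.

Lemma mem_bbox_column (s : seq cell) (c : cell) : c \in s ->
  exists2 n, (n < pwidth s)%N & c.1 = xmin s + n%:Z.
Proof.
move=> /mem_bbox/andP[/andP[le_x le_X] _].
by exists `|c.1 - xmin s|%N; rewrite /pwidth; lia.
Qed.

(* Row 0 is the top row, as in [poly_matrix]. *)
Definition corner_pattern (s : seq cell) (x1 x2 y1 y2 : int) : 'M[bool]_2 :=
  \matrix_(i < 2, j < 2)
    ((if (j : nat) == 0%N then x1 else x2, if (i : nat) == 0%N then y2 else y1) \in s).

Lemma submatrix_corners (s : seq cell) (A : 'M[bool]_2) : submatrix_of A (poly_matrix s) ->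
  exists x1 x2 y1 y2, [/\ x1 < x2, y1 < y2 & corner_pattern s x1 x2 y1 y2 = A].
Proof.
move=> [f [g [f_mono [g_mono EA]]]].
exists (xmin s + (g 0)%:Z), (xmin s + (g 1)%:Z), (ymax s - (f 1)%:Z), (ymax s - (f 0)%:Z).
have := f_mono 0 1 isT; have := g_mono 0 1 isT => lt_g lt_f.
split; [lia | lia | apply/matrixP => i j].
rewrite -EA !mxE; case: i j => [[|[|//]] ?] [[|[|//]] ?] /=;
  by congr ((_ + (g _)%:Z, _ - (f _)%:Z) \in s); apply: val_inj.
Qed.

Lemma corners_submatrix (s : seq cell) (A : 'M[bool]_2) (x1 x2 y1 y2 : int) :
  x1 < x2 -> y1 < y2 -> (x1, y2) \in s -> (x2, y1) \in s ->
  corner_pattern s x1 x2 y1 y2 = A -> submatrix_of A (poly_matrix s).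
Proof.
move=> lt_x lt_y /mem_bbox/andP[/andP[/= le_x1 _] /andP[_ le_y2]].
move=> /mem_bbox/andP[/andP[_ /= le_x2] /andP[le_y1 _]] <-.
have rowK y : ymin s <= y <= ymax s ->
    (inord `|ymax s - y| : 'I_(pheight s)) = `|ymax s - y|%N :> nat.
  by move=> le_y; rewrite inordK // /pheight; lia.
have colK x : xmin s <= x <= xmax s ->
    (inord `|x - xmin s| : 'I_(pwidth s)) = `|x - xmin s|%N :> nat.
  by move=> le_x; rewrite inordK // /pwidth; lia.
exists (fun i : 'I_2 => inord `|ymax s - (if (i : nat) == 0%N then y2 else y1)|).
exists (fun j : 'I_2 => inord `|(if (j : nat) == 0%N then x1 else x2) - xmin s|).
split; [|split].
- by case=> [[|[|//]] ?] [[|[|//]] ?] //= _; rewrite !rowK; lia.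
- by case=> [[|[|//]] ?] [[|[|//]] ?] //= _; rewrite !colK; lia.
- move=> [[|[|//]] ?] [[|[|//]] ?]; rewrite !mxE /= rowK ?colK; try lia.
  all: by congr ((_, _) \in s); lia.
Qed.

Definition ne_closed (s : seq cell) := forall x1 x2 y1 y2 : int, x1 < x2 -> y1 < y2 ->
  (x1, y1) \in s -> (x1, y2) \in s -> (x2, y1) \in s -> (x2, y2) \in s.

Definition sw_closed (s : seq cell) := forall x1 x2 y1 y2 : int, x1 < x2 -> y1 < y2 ->
  (x1, y2) \in s -> (x2, y2) \in s -> (x2, y1) \in s -> (x1, y1) \in s.

Lemma ne_closedP (s : seq cell) : ne_closed s <-> ~ submatrix_of pat1 (poly_matrix s).
Proof.
split=> [closed /submatrix_corners[x1 [x2 [y1 [y2 [lt_x lt_y /matrixP EA]]]]]|nsub].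
  move: (EA 0 0) (EA 0 1) (EA 1 0) (EA 1 1); rewrite !mxE /= => NW NE SW SE.
  by rewrite (closed _ _ _ _ lt_x lt_y SW NW SE) in NE.
move=> x1 x2 y1 y2 lt_x lt_y SW NW SE; apply/idPn => NE; apply: nsub.
apply: (corners_submatrix lt_x lt_y NW SE); apply/matrixP => i j; rewrite !mxE.
by case: i j => [[|[|//]] ?] [[|[|//]] ?] /=; rewrite ?(negbTE NE).
Qed.

Lemma sw_closedP (s : seq cell) : sw_closed s <-> ~ submatrix_of pat2 (poly_matrix s).
Proof.
split=> [closed /submatrix_corners[x1 [x2 [y1 [y2 [lt_x lt_y /matrixP EA]]]]]|nsub].
  move: (EA 0 0) (EA 0 1) (EA 1 0) (EA 1 1); rewrite !mxE /= => NW NE SW SE.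
  by rewrite (closed _ _ _ _ lt_x lt_y NW NE SE) in SW.
move=> x1 x2 y1 y2 lt_x lt_y NW NE SE; apply/idPn => SW; apply: nsub.
apply: (corners_submatrix lt_x lt_y NW SE); apply/matrixP => i j; rewrite !mxE.
by case: i j => [[|[|//]] ?] [[|[|//]] ?] /=; rewrite ?(negbTE SW).
Qed.

Lemma avoids_pats_closed (s : seq cell) : avoids_pats s <-> ne_closed s /\ sw_closed s.
Proof. by split=> -[/ne_closedP ne /sw_closedP sw]; split. Qed.

Lemma parallelogram_closed (s : seq cell) : is_parallelogram s -> ne_closed s /\ sw_closed s.
Proof.
move=> [u [l [dx [dy [_ [_ [_ Es]]]]]]]; split.
- move=> x1 x2 y1 y2 lt_x lt_y _ /Es[n1 [yu1 [_ [/= E1 [U1 [_ [_ lt1]]]]]]].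
  move=> /Es[n2 [yu2 [yl2 [/= E2 [U2 [L2 [le2 _]]]]]]].
  have /(east_step_mono U1 U2) le_yu : (n1 <= n2)%N by lia.
  by apply/Es; exists n2, yu2, yl2; do 3 split=> //=; lia.
- move=> x1 x2 y1 y2 lt_x lt_y /Es[n1 [yu1 [yl1 [/= E1 [U1 [L1 [_ lt1]]]]]]] _.
  move=> /Es[n2 [_ [yl2 [/= E2 [_ [L2 [le2 _]]]]]]].
  have /(east_step_mono L1 L2) le_yl : (n1 <= n2)%N by lia.
  by apply/Es; exists n1, yu1, yl1; do 3 split=> //=; lia.
Qed.

(** * Columns of a closed polyomino *)

Lemma adjacent_other_column (c d : cell) : adjacent c d -> c.1 != d.1 ->
  c.2 = d.2 /\ (d.1 = c.1 + 1 \/ d.1 = c.1 - 1).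
Proof. by case: c d => [a b] [e f]; rewrite /adjacent => /eqP adj /eqP; lia. Qed.

Lemma path_cross_column (c : cell) p (X : int) : path adjacent c p -> c.1 <= X < (last c p).1 ->
  exists y, ((X, y) \in c :: p) && ((X + 1, y) \in c :: p).
Proof.
elim: p c => [|d p IH] c /=; first by lia.
case/andP=> adj_cd adj_p /andP[le_cX lt_X].
have [/andP[cX dX]|] := boolP ((c.1 == X) && (d.1 == X + 1)).
  have c_ne_d : c.1 != d.1 by rewrite (eqP cX) (eqP dX); lia.
  have [cd2 _] := adjacent_other_column adj_cd c_ne_d.
  exists c.2; rewrite -(eqP dX) -(eqP cX) {2}cd2 -!surjective_pairing.
  by rewrite !inE !eqxx orbT.
move=> not_cross; have [|y /andP[Xy X1y]] := IH d adj_p.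
  rewrite lt_X andbT; move: adj_cd not_cross le_cX; case: c d {IH adj_p lt_X} => [a b] [e f].
  by rewrite /adjacent negb_and /= => /eqP adj /orP[/eqP|/eqP]; lia.
by exists y; rewrite !(in_cons c) Xy X1y !orbT.
Qed.

Lemma path_same_side (c : cell) p (X : int) : path adjacent c p ->
  all (fun e : cell => e.1 != X) (c :: p) -> (c.1 < X) = ((last c p).1 < X).
Proof.
elim: p c => [|d p IH] c //= /andP[adj_cd adj_p] /and3P[cX dX p_X].
rewrite -IH /= ?dX //; move: adj_cd cX dX; case: c d {IH adj_p p_X} => [a b] [e f] /=.
by rewrite /adjacent /= => /eqP adj /eqP cX /eqP dX; apply/idP/idP => ?; lia.
Qed.

Lemma detour_ends (X A B : int) (r : cell) p :
  adjacent (X, A) r -> path adjacent r p -> adjacent (last r p) (X, B) ->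
  all (fun e : cell => e.1 != X) (r :: p) ->
  exists X', [/\ X' = X + 1 \/ X' = X - 1, r = (X', A) & last r p = (X', B)].
Proof.
move=> adj_r adj_p adj_last off_X.
have /= /andP[rX _] := off_X; have lX := allP off_X _ (mem_last r p).
have Xr : (X, A).1 != r.1 by rewrite eq_sym.
have [Ar r1] := adjacent_other_column adj_r Xr.
have [lB l1] := adjacent_other_column adj_last lX.
have side := path_same_side adj_p off_X.
exists r.1; split=> //; first by rewrite [r]surjective_pairing -Ar.
rewrite [last r p]surjective_pairing lB; congr (_, _).
by move: side r1 l1 => /=; do 2 case: ltP => ? //; lia.
Qed.

Lemma column_fill (s : seq cell) (X X' A B C : int) : ne_closed s -> sw_closed s ->
  X' = X + 1 \/ X' = X - 1 -> (X, A) \in s -> (X, B) \in s ->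
  (X', A) \in s -> (X', B) \in s -> (X', C) \in s -> A < C < B -> (X, C) \in s.
Proof.
move=> ne sw [->|->] XA XB X'A X'B X'C /andP[lt_AC lt_CB].
- by apply: (sw X (X + 1) C B) => //; lia.
- by apply: (ne (X - 1) X A C) => //; lia.
Qed.

(* Cut the path at its first return to column X.  If it only returns at (X, B), it
   runs from (X', A) to (X', B) in a neighbouring column X' ([detour_ends]); induction
   gives (X', C) and [column_fill] moves it to column X.  Otherwise one of the two
   pieces has ends enclosing C. *)
Lemma column_convex (s : seq cell) (X A B C : int) p : ne_closed s -> sw_closed s ->
  (X, A) \in s -> {subset p <= s} -> path adjacent (X, A) p -> last (X, A) p = (X, B) ->
  A < C < B -> (X, C) \in s.
Proof.
move=> ne sw; have [n] := ubnP (size p); elim: n => // n IH in p X A B *.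
rewrite ltnS => size_p XA p_s adj_p endB /andP[lt_AC lt_CB].
have hasX : has (fun e : cell => e.1 == X) p.
  case: p {size_p p_s adj_p} endB => [[/eqP]|e p endB]; first by lia.
  by apply/hasP; exists (last e p); [exact: mem_last | move: endB => /= ->].
case: (split_find hasX) size_p p_s adj_p endB => [[x q2] p1 p2 /eqP /= -> {x}].
rewrite -all_predC size_cat size_rcons cat_path rcons_path last_cat last_rcons.
move=> p1_off size_p p_s /andP[/andP[adj_p1 adj_q] adj_p2] endB.
have q_s : (X, q2) \in s by apply: p_s; rewrite mem_cat mem_rcons mem_head.
have p1_s : {subset p1 <= s}.
  by move=> e e_p1; apply: p_s; rewrite mem_cat mem_rcons in_cons e_p1 orbT.
case: p2 => [|r p2] in size_p p_s adj_p2 endB *.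
  case: endB => Eq2; subst q2; case: p1 => [|r p1] in p1_off size_p p_s p1_s adj_p1 adj_q *.
    by move: adj_q; rewrite /adjacent /= => /eqP; lia.
  case/andP: adj_p1 => adj_r adj_p1.
  have [X' [X'X Er El]] := detour_ends adj_r adj_p1 adj_q p1_off.
  have X'A : (X', A) \in s by rewrite -Er p1_s ?mem_head.
  have X'B : (X', B) \in s by rewrite -El p1_s ?mem_last.
  apply: (column_fill ne sw X'X XA q_s X'A X'B); last by rewrite lt_AC.
  apply: (IH p1 X' A B) => //; rewrite -?Er ?lt_AC //=; first by move: size_p => /=; lia.
  by move=> e e_p1; apply: p1_s; rewrite in_cons e_p1 orbT.
case: (ltgtP q2 C) => [lt_q2C|lt_Cq2|<- //].
- apply: (IH (r :: p2) X q2 B) => //=; last by rewrite lt_q2C.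
    by move: size_p => /=; lia.
  by move=> e e_p2; apply: p_s; rewrite mem_cat e_p2 orbT.
- apply: (IH (rcons p1 (X, q2)) X A q2).
  all: rewrite ?size_rcons ?rcons_path ?last_rcons ?adj_p1 ?lt_AC //=.
    by move: size_p => /=; lia.
  by move=> e; rewrite mem_rcons in_cons => /orP[/eqP ->|/p1_s].
Qed.

(* On an empty column these are the junk values [ymax s] and [ymin s]. *)
Definition col_bottom (s : seq cell) (X : int) := \big[Num.min/ymax s]_(c <- s | c.1 == X) c.2.
Definition col_top (s : seq cell) (X : int) := \big[Num.max/ymin s]_(c <- s | c.1 == X) c.2.

Lemma col_bottom_le (s : seq cell) (X y : int) : (X, y) \in s -> col_bottom s X <= y.
Proof. by move=> Xy; apply: (ge_bigmin_seq _ (X, y)) => //=. Qed.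

Lemma col_top_ge (s : seq cell) (X y : int) : (X, y) \in s -> y <= col_top s X.
Proof. by move=> Xy; apply: (le_bigmax_seq _ (X, y)) => //=. Qed.

Lemma col_bottom_mem (s : seq cell) (X y : int) : (X, y) \in s -> (X, col_bottom s X) \in s.
Proof.
move=> Xy; have := bigmin_mem [seq c <- s | c.1 == X] (ymax s) (fun c : cell => c.2).
rewrite big_filter -/(col_bottom s X) inE => /orP[/eqP Eb|/mapP[c]].
  have /andP[_ /andP[_ le_y]] := mem_bbox Xy; have := col_bottom_le Xy.
  by rewrite Eb => le_y'; have <- : y = ymax s by apply/eqP; rewrite eq_le le_y le_y'.
by rewrite mem_filter => /andP[/eqP <- cs] ->; rewrite -surjective_pairing.
Qed.

Lemma col_top_mem (s : seq cell) (X y : int) : (X, y) \in s -> (X, col_top s X) \in s.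
Proof.
move=> Xy; have := bigmax_mem [seq c <- s | c.1 == X] (ymin s) (fun c : cell => c.2).
rewrite big_filter -/(col_top s X) inE => /orP[/eqP Et|/mapP[c]].
  have /andP[_ /andP[le_y _]] := mem_bbox Xy; have := col_top_ge Xy.
  by rewrite Et => le_y'; have <- : y = ymin s by apply/eqP; rewrite eq_le le_y le_y'.
by rewrite mem_filter => /andP[/eqP <- cs] ->; rewrite -surjective_pairing.
Qed.

Lemma column_interval (s : seq cell) (X y0 : int) : is_polyomino s -> ne_closed s -> sw_closed s ->
  (X, y0) \in s -> forall y, (X, y) \in s = (col_bottom s X <= y <= col_top s X).
Proof.
move=> [_ connected] ne sw Xy0 y; apply/idP/idP => [Xy|/andP[le_by le_yt]].
  by rewrite col_bottom_le ?col_top_ge.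
have Xb := col_bottom_mem Xy0; have Xt := col_top_mem Xy0.
have [<- //|ne_by] := eqVneq (col_bottom s X) y.
have [-> //|ne_yt] := eqVneq y (col_top s X).
have [p [/allP p_s [adj_p endp]]] := connected _ _ Xb Xt.
by apply: (column_convex ne sw Xb p_s adj_p endp); rewrite !lt_neqAle ne_by ne_yt le_by le_yt.
Qed.

Lemma polyomino_columns_overlap (s : seq cell) (X : int) : is_polyomino s ->
  xmin s <= X < xmax s -> exists y, ((X, y) \in s) && ((X + 1, y) \in s).
Proof.
move=> [s_ne connected] X_range.
have /mapP[cl cl_s El] := xmin_mem s_ne; have /mapP[cr cr_s Er] := xmax_mem s_ne.
have [p [/allP p_s [adj_p endp]]] := connected _ _ cl_s cr_s.
have clp_s : {subset cl :: p <= s} by move=> e /predU1P[->|/p_s].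
have [|y /andP[/clp_s Xy /clp_s X1y]] := path_cross_column (X := X) adj_p.
  by rewrite endp -El -Er.
by exists y; rewrite Xy X1y.
Qed.

Lemma neighbour_columns (s : seq cell) (X y b t b' t' : int) : ne_closed s -> sw_closed s ->
  (forall z, (X, z) \in s = (b <= z <= t)) -> (forall z, (X + 1, z) \in s = (b' <= z <= t')) ->
  (X, y) \in s -> (X + 1, y) \in s -> [/\ b <= b', t <= t' & b' <= t].
Proof.
move=> ne sw EX EX1 Xy X1y; have lt_X : X < X + 1 by rewrite ltrDl.
have /andP[le_by le_yt] : b <= y <= t by rewrite -EX.
have /andP[le_b'y le_yt'] : b' <= y <= t' by rewrite -EX1.
split; [rewrite leNgt; apply/negP => lt_b'b | rewrite leNgt; apply/negP => lt_t't |].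
- have X1b' : (X + 1, b') \in s by rewrite EX1 lexx (le_trans le_b'y).
  have := sw _ _ _ _ lt_X (lt_le_trans lt_b'b le_by) Xy X1y X1b'.
  by rewrite EX leNgt lt_b'b.
- have Xt : (X, t) \in s by rewrite EX lexx (le_trans le_by).
  have := ne _ _ _ _ lt_X (le_lt_trans le_yt' lt_t't) Xy Xt X1y.
  by rewrite EX1 andbC leNgt lt_t't.
- exact: le_trans le_yt.
Qed.

Lemma closed_polyomino_parallelogram (s : seq cell) :
  is_polyomino s -> ne_closed s -> sw_closed s -> is_parallelogram s.
Proof.
move=> poly ne sw; have [c0 c0_s _] := mapP (xmin_mem (proj1 poly)).
have /andP[/andP[le_min le_max] _] := mem_bbox c0_s.
have overlap n : (n.+1 < pwidth s)%N ->
    exists y, ((xmin s + n%:Z, y) \in s) && ((xmin s + n%:Z + 1, y) \in s).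
  by move=> lt_n; apply: polyomino_columns_overlap => //; move: lt_n; rewrite /pwidth; lia.
have col_ne n : (n < pwidth s)%N -> exists y, (xmin s + n%:Z, y) \in s.
  move=> lt_n; have [lt_n1|le_n1] := ltnP n.+1 (pwidth s).
    by have [y /andP[Xy _]] := overlap n lt_n1; exists y.
  have /mapP[c cs Ec] := xmax_mem (proj1 poly); exists c.2.
  have -> : xmin s + n%:Z = c.1 by move: lt_n le_n1; rewrite -Ec /pwidth; lia.
  by rewrite -surjective_pairing.
have colE n : (n < pwidth s)%N -> forall y, (xmin s + n%:Z, y) \in s =
    (col_bottom s (xmin s + n%:Z) <= y <= col_top s (xmin s + n%:Z)).
  by move=> /col_ne[y0 Xy0]; apply: column_interval Xy0.
apply: (parallelogram_of_columns (x0 := xmin s) (W := pwidth s)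
  (b := fun n => col_bottom s (xmin s + n%:Z)) (t := fun n => col_top s (xmin s + n%:Z))) => //.
- by move=> n lt_n; have [y0] := col_ne n lt_n; rewrite colE // => /andP[/le_trans]; apply.
- move=> n lt_n; have [y /andP[Xy X1y]] := overlap n lt_n.
  have succE : xmin s + n.+1%:Z = xmin s + n%:Z + 1 by lia.
  by apply: (neighbour_columns ne sw (colE n (ltnW lt_n))) Xy X1y => z; rewrite -succE colE.
- move=> [x y]; split=> [xy|[n lt_n /= [-> ybt]]]; last by rewrite colE.
  have [n lt_n /= Ex] := mem_bbox_column xy.
  by exists n => //; split=> //; rewrite -colE // -Ex.
Qed.

Theorem proposition14 (s : seq cell) :
  is_polyomino s -> (is_parallelogram s <-> avoids_pats s).
Proof.
move=> poly; split=> [par|/avoids_pats_closed[ne sw]].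
  by apply/avoids_pats_closed; apply: parallelogram_closed.
exact: closed_polyomino_parallelogram.
Qed.
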